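(* For every bunched context $\Delta(-)$ and formulas $\varphi,\psi,\chi$: (i) if $\Delta(\varphi\wedge\psi)\vdash_{\mathsf{cf}}\chi$ then $\Delta(\varphi\mathbin{;}\psi)\vdash_{\mathsf{cf}}\chi$; (ii) if $\Delta(\varphi\ast\psi)\vdash_{\mathsf{cf}}\chi$ then $\Delta(\varphi\mathbin{,}\psi)\vdash_{\mathsf{cf}}\chi$; (iii) if $\Delta(\top)\vdash_{\mathsf{cf}}\chi$ then $\Delta(\varnothing_a)\vdash_{\mathsf{cf}}\chi$; (iv) if $\Delta(\mathsf{emp})\vdash_{\mathsf{cf}}\chi$ then $\Delta(\varnothing_m)\vdash_{\mathsf{cf}}\chi$.
   Context: Formulas of BI: $\varphi,\psi ::= \top \mid \bot \mid \varphi\wedge\psi \mid \varphi\vee\psi \mid \varphi\to\psi \mid \mathsf{emp} \mid \varphi\ast\psi \mid \varphi -\!\!\ast\, \psi \mid a$, $a\in\mathrm{Atom}$. Bunches are finite binary trees whose leaves are formulas or empty bunches $\varnothing_m,\varnothing_a$ and whose internal nodes are labelled by the multiplicative comma ($\Delta_1\mathbin{,}\Delta_2$) or the additive semicolon ($\Delta_1\mathbin{;}\Delta_2$). A bunched context $\Delta(-)$ is a bunch with one leaf replaced by a hole; $\Delta(\Gamma)$ fills it with $\Gamma$. Bunch equivalence $\equiv$ is the least equivalence relation making $\mathbin{,}$ commutative, associative with unit $\varnothing_m$, $\mathbin{;}$ commutative, associative with unit $\varnothing_a$, and closed under contexts. The cut-free BI sequent calculus ($\Delta\vdash_{\mathsf{cf}}\varphi$)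 has the rules: (ax) $a\vdash a$ for atoms $a$; (equiv) from $\Delta'\vdash\varphi$, $\Delta\equiv\Delta'$ infer $\Delta\vdash\varphi$; (W;) from $\Delta(\Delta_1)\vdash\varphi$ infer $\Delta(\Delta_1\mathbin{;}\Delta_2)\vdash\varphi$; (C;) from $\Delta(\Delta_1\mathbin{;}\Delta_1)\vdash\varphi$ infer $\Delta(\Delta_1)\vdash\varphi$; (empR) $\varnothing_m\vdash\mathsf{emp}$; (empL) from $\Delta(\varnothing_m)\vdash\varphi$ infer $\Delta(\mathsf{emp})\vdash\varphi$; ($\ast$R) from $\Delta_1\vdash\varphi$, $\Delta_2\vdash\psi$ infer $\Delta_1\mathbin{,}\Delta_2\vdash\varphi\ast\psi$; ($\ast$L) from $\Delta(\varphi\mathbin{,}\psi)\vdash\chi$ infer $\Delta(\varphi\ast\psi)\vdash\chi$; ($-\!\ast$R) from $\Delta\mathbin{,}\varphi\vdash\psi$ infer $\Delta\vdash\varphi-\!\!\ast\,\psi$; ($-\!\ast$L) from $\Delta_1\vdash\varphi$, $\Delta(\Delta_2\mathbin{,}\psi)\vdash\chi$ infer $\Delta((\Delta_1\mathbin{,}\Delta_2)\mathbin{,}(\varphi-\!\!\ast\,\psi))\vdash\chi$; ($\top$R) $\varnothing_a\vdash\top$; ($\top$L) from $\Delta(\varnothing_a)\vdash\varphi$ infer $\Delta(\top)\vdash\varphi$; ($\wedge$R) from $\Delta_1\vdash\varphi$, $\Delta_2\vdash\psi$ infer $\Delta_1\mathbin{;}\Delta_2\vdash\varphi\wedge\psi$;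 ($\wedge$L) from $\Delta(\varphi\mathbin{;}\psi)\vdash\chi$ infer $\Delta(\varphi\wedge\psi)\vdash\chi$; ($\to$R) from $\Delta\mathbin{;}\varphi\vdash\psi$ infer $\Delta\vdash\varphi\to\psi$; ($\to$L) from $\Delta_1\vdash\varphi$, $\Delta(\Delta_2\mathbin{;}\psi)\vdash\chi$ infer $\Delta((\Delta_1\mathbin{;}\Delta_2)\mathbin{;}(\varphi\to\psi))\vdash\chi$; ($\bot$L) $\Delta(\bot)\vdash\varphi$; ($\vee$R1/2) from $\Delta\vdash\varphi$ (resp. $\Delta\vdash\psi$) infer $\Delta\vdash\varphi\vee\psi$; ($\vee$L) from $\Delta(\varphi)\vdash\chi$, $\Delta(\psi)\vdash\chi$ infer $\Delta(\varphi\vee\psi)\vdash\chi$. (No cut rule.) *)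

Inductive formula : Type :=
| FTop | FBot
| FAnd : formula -> formula -> formula
| FOr : formula -> formula -> formula
| FImp : formula -> formula -> formula
| FEmp
| FStar : formula -> formula -> formula
| FWand : formula -> formula -> formula
| FAtom : nat -> formula.

Inductive bunch : Type :=
| BForm : formula -> bunch
| BEmpM : bunch
| BEmpA : bunch
| BComma : bunch -> bunch -> bunch
| BSemi : bunch -> bunch -> bunch.

Inductive ctx : Type :=
| CHole : ctx
| CCommaL : ctx -> bunch -> ctx
| CCommaR : bunch -> ctx -> ctx
| CSemiL : ctx -> bunch -> ctx
| CSemiR : bunch -> ctx -> ctx.

Fixpoint fill (D : ctx) (G : bunch) : bunch :=
  match D with
  | CHole => G
  | CCommaL D' B => BComma (fill D' G) B
  | CCommaR B D' => BComma B (fill D' G)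
  | CSemiL D' B => BSemi (fill D' G) B
  | CSemiR B D' => BSemi B (fill D' G)
  end.

Inductive beq : bunch -> bunch -> Prop :=
| beq_refl : forall A, beq A A
| beq_sym : forall A B, beq A B -> beq B A
| beq_trans : forall A B C, beq A B -> beq B C -> beq A C
| beq_comma_comm : forall A B, beq (BComma A B) (BComma B A)
| beq_comma_assoc : forall A B C,
    beq (BComma A (BComma B C)) (BComma (BComma A B) C)
| beq_comma_unit : forall A, beq (BComma A BEmpM) A
| beq_semi_comm : forall A B, beq (BSemi A B) (BSemi B A)
| beq_semi_assoc : forall A B C,
    beq (BSemi A (BSemi B C)) (BSemi (BSemi A B) C)
| beq_semi_unit : forall A, beq (BSemi A BEmpA) A
| beq_ctx : forall (D : ctx) A B, beq A B -> beq (fill D A) (fill D B).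

Inductive cf : bunch -> formula -> Prop :=
| cf_ax : forall a, cf (BForm (FAtom a)) (FAtom a)
| cf_equiv : forall D D' p, cf D' p -> beq D D' -> cf D p
| cf_WSemi : forall (D : ctx) D1 D2 p,
    cf (fill D D1) p -> cf (fill D (BSemi D1 D2)) p
| cf_CSemi : forall (D : ctx) D1 p,
    cf (fill D (BSemi D1 D1)) p -> cf (fill D D1) p
| cf_empR : cf BEmpM FEmp
| cf_empL : forall (D : ctx) p,
    cf (fill D BEmpM) p -> cf (fill D (BForm FEmp)) p
| cf_starR : forall D1 D2 p q,
    cf D1 p -> cf D2 q -> cf (BComma D1 D2) (FStar p q)
| cf_starL : forall (D : ctx) p q r,
    cf (fill D (BComma (BForm p) (BForm q))) r ->
    cf (fill D (BForm (FStar p q))) r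
| cf_wandR : forall D p q,
    cf (BComma D (BForm p)) q -> cf D (FWand p q)
| cf_wandL : forall (D : ctx) D1 D2 p q r,
    cf D1 p -> cf (fill D (BComma D2 (BForm q))) r ->
    cf (fill D (BComma (BComma D1 D2) (BForm (FWand p q)))) r
| cf_topR : cf BEmpA FTop
| cf_topL : forall (D : ctx) p,
    cf (fill D BEmpA) p -> cf (fill D (BForm FTop)) p
| cf_andR : forall D1 D2 p q,
    cf D1 p -> cf D2 q -> cf (BSemi D1 D2) (FAnd p q)
| cf_andL : forall (D : ctx) p q r,
    cf (fill D (BSemi (BForm p) (BForm q))) r ->
    cf (fill D (BForm (FAnd p q))) r
| cf_impR : forall D p q,
    cf (BSemi D (BForm p)) q -> cf D (FImp p q)
| cf_impL : forall (D : ctx) D1 D2 p q r,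
    cf D1 p -> cf (fill D (BSemi D2 (BForm q))) r ->
    cf (fill D (BSemi (BSemi D1 D2) (BForm (FImp p q)))) r
| cf_botL : forall (D : ctx) p, cf (fill D (BForm FBot)) p
| cf_orR1 : forall D p q, cf D p -> cf D (FOr p q)
| cf_orR2 : forall D p q, cf D q -> cf D (FOr p q)
| cf_orL : forall (D : ctx) p q r,
    cf (fill D (BForm p)) r -> cf (fill D (BForm q)) r ->
    cf (fill D (BForm (FOr p q))) r.


(* Each of the rules ∧L, ∗L, ⊤L and empL has as premise its conclusion with
   the principal formula a replaced by a bunch b.  Replace a by b at any set of
   leaves of a whole derivation: an occurrence that is principal in its left
   rule is replaced by exactly that rule's premise, every other rule commutes
   with the replacement, and bunch equivalence is respected because
   replacement is a bisimulation for it. *)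

Inductive left_unfold : formula -> bunch -> Prop :=
| unfold_top : left_unfold FTop BEmpA
| unfold_emp : left_unfold FEmp BEmpM
| unfold_and p q : left_unfold (FAnd p q) (BSemi (BForm p) (BForm q))
| unfold_star p q : left_unfold (FStar p q) (BComma (BForm p) (BForm q)).

Section Replacement.

Variables (a : formula) (b : bunch).

Inductive repl : bunch -> bunch -> Prop :=
| repl_keep f : repl (BForm f) (BForm f)
| repl_hit : repl (BForm a) b
| repl_empM : repl BEmpM BEmpM
| repl_empA : repl BEmpA BEmpA
| repl_comma A B A' B' : repl A A' -> repl B B' -> repl (BComma A B) (BComma A' B')
| repl_semi A B A' B' : repl A A' -> repl B B' -> repl (BSemi A B) (BSemi A' B').

Inductive ctx_repl : ctx -> ctx -> Prop :=
| ctx_repl_hole : ctx_repl CHole CHole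
| ctx_repl_commaL D D' B B' :
    ctx_repl D D' -> repl B B' -> ctx_repl (CCommaL D B) (CCommaL D' B')
| ctx_repl_commaR D D' B B' :
    ctx_repl D D' -> repl B B' -> ctx_repl (CCommaR B D) (CCommaR B' D')
| ctx_repl_semiL D D' B B' :
    ctx_repl D D' -> repl B B' -> ctx_repl (CSemiL D B) (CSemiL D' B')
| ctx_repl_semiR D D' B B' :
    ctx_repl D D' -> repl B B' -> ctx_repl (CSemiR B D) (CSemiR B' D').

#[local] Hint Constructors repl ctx_repl : core.

Lemma repl_refl X : repl X X.
Proof. induction X; auto. Qed.

Lemma ctx_repl_refl D : ctx_repl D D.
Proof. induction D; auto using repl_refl. Qed.

#[local] Hint Resolve repl_refl ctx_repl_refl : core.

Lemma repl_fill D D' X Z : ctx_repl D D' -> repl X Z -> repl (fill D X) (fill D' Z).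
Proof. induction 1; simpl; auto. Qed.

#[local] Hint Resolve repl_fill : core.

Lemma repl_fill_inv D X Y : repl (fill D X) Y ->
  exists D' Z, Y = fill D' Z /\ ctx_repl D D' /\ repl X Z.
Proof.
  revert Y; induction D as [| D IH B | B D IH | D IH B | B D IH]; simpl; intros Y HY.
  - exists CHole, Y; auto.
  - inversion HY as [| | | | ? ? A' B' HA HB |]; subst.
    destruct (IH _ HA) as (D' & Z & -> & ? & ?).
    exists (CCommaL D' B'), Z; auto.
  - inversion HY as [| | | | ? ? A' B' HA HB |]; subst.
    destruct (IH _ HB) as (D' & Z & -> & ? & ?).
    exists (CCommaR A' D'), Z; auto.
  - inversion HY as [| | | | | ? ? A' B' HA HB]; subst.
    destruct (IH _ HA) as (D' & Z & -> & ? & ?).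
    exists (CSemiL D' B'), Z; auto.
  - inversion HY as [| | | | | ? ? A' B' HA HB]; subst.
    destruct (IH _ HB) as (D' & Z & -> & ? & ?).
    exists (CSemiR A' D'), Z; auto.
Qed.

Lemma repl_leaf_inv f Y : repl (BForm f) Y -> Y = BForm f \/ (f = a /\ Y = b).
Proof. inversion 1; auto. Qed.

Definition repl_sim (A B : bunch) : Prop :=
  forall Y, repl A Y -> exists Y', repl B Y' /\ beq Y Y'.

Lemma repl_sim_trans A B C : repl_sim A B -> repl_sim B C -> repl_sim A C.
Proof.
  intros HAB HBC Y HY.
  destruct (HAB _ HY) as (Y1 & H1 & E1); destruct (HBC _ H1) as (Y2 & H2 & E2).
  eauto using beq_trans.
Qed.

Lemma repl_sim_fill D A B : repl_sim A B -> repl_sim (fill D A) (fill D B).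
Proof.
  intros HAB Y HY.
  destruct (repl_fill_inv _ _ _ HY) as (D' & Z & -> & HD & HZ).
  destruct (HAB _ HZ) as (Z' & ? & ?).
  exists (fill D' Z'); auto using beq_ctx.
Qed.

Ltac repl_sim_axiom ax :=
  intros Y HY; repeat match goal with
  | H : repl (BComma _ _) _ |- _ => inversion H; subst; clear H
  | H : repl (BSemi _ _) _ |- _ => inversion H; subst; clear H
  | H : repl BEmpM _ |- _ => inversion H; subst; clear H
  | H : repl BEmpA _ |- _ => inversion H; subst; clear H
  end;
  eexists; split; [| first [apply ax | apply beq_sym, ax]]; eauto.

Lemma beq_repl_sim A B : beq A B -> repl_sim A B /\ repl_sim B A.
Proof.
  induction 1 as [A | A B _ [IH1 IH2] | A B C _ [IH1 IH2] _ [IH3 IH4]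
    | | | A | | | A | D A B _ [IH1 IH2]].
  - split; intros Y HY; eauto using beq_refl.
  - auto.
  - eauto using repl_sim_trans.
  - split; repl_sim_axiom beq_comma_comm.
  - split; repl_sim_axiom beq_comma_assoc.
  - split; repl_sim_axiom beq_comma_unit.
  - split; repl_sim_axiom beq_semi_comm.
  - split; repl_sim_axiom beq_semi_assoc.
  - split; repl_sim_axiom beq_semi_unit.
  - auto using repl_sim_fill.
Qed.

Hypothesis unfold_ab : left_unfold a b.

Ltac inv_fill HY :=
  destruct (repl_fill_inv _ _ _ HY) as (D' & Z & -> & HD & HZ).

Ltac inv_leaf HZ :=
  destruct (repl_leaf_inv _ _ HZ) as [-> | [<- ->]].

Lemma cf_repl X r : cf X r -> forall Y, repl X Y -> cf Y r.
Proof.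
  induction 1 as [c | X X' r _ IH Hbeq | D D1 D2 r _ IH | D D1 r _ IH | | D r _ IH
    | D1 D2 p q _ IH1 _ IH2 | D p q r _ IH | X p q _ IH
    | D D1 D2 p q r _ IH1 _ IH2 | | D r _ IH | D1 D2 p q _ IH1 _ IH2
    | D p q r _ IH | X p q _ IH | D D1 D2 p q r _ IH1 _ IH2 | D r
    | X p q _ IH | X p q _ IH | D p q r _ IH1 _ IH2];
    intros Y HY.
  - inv_leaf HY; [apply cf_ax | inversion unfold_ab].
  - destruct (proj1 (beq_repl_sim _ _ Hbeq) _ HY) as (Y' & ? & ?).
    eapply cf_equiv; eauto.
  - inv_fill HY; inversion HZ; subst. apply cf_WSemi; auto.
  - inv_fill HY. apply cf_CSemi; auto.
  - inversion HY; apply cf_empR.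
  - inv_fill HY; inv_leaf HZ; [apply cf_empL | inversion unfold_ab; subst]; auto.
  - inversion HY; subst; apply cf_starR; auto.
  - inv_fill HY; inv_leaf HZ; [apply cf_starL | inversion unfold_ab; subst]; auto.
  - apply cf_wandR; auto.
  - inv_fill HY; inversion HZ as [| | | | ? ? ? W HD12 HW |]; subst.
    inversion HD12; subst; inv_leaf HW; [| inversion unfold_ab].
    apply cf_wandL; auto.
  - inversion HY; apply cf_topR.
  - inv_fill HY; inv_leaf HZ; [apply cf_topL | inversion unfold_ab; subst]; auto.
  - inversion HY; subst; apply cf_andR; auto.
  - inv_fill HY; inv_leaf HZ; [apply cf_andL | inversion unfold_ab; subst]; auto.
  - apply cf_impR; auto.
  - inv_fill HY; inversion HZ as [| | | | | ? ? ? W HD12 HW]; subst.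
    inversion HD12; subst; inv_leaf HW; [| inversion unfold_ab].
    apply cf_impL; auto.
  - inv_fill HY; inv_leaf HZ; [apply cf_botL | inversion unfold_ab].
  - apply cf_orR1; auto.
  - apply cf_orR2; auto.
  - inv_fill HY; inv_leaf HZ; [apply cf_orL | inversion unfold_ab]; auto.
Qed.

Lemma cf_left_unfold D r : cf (fill D (BForm a)) r -> cf (fill D b) r.
Proof. intros H; apply (cf_repl _ _ H); auto. Qed.

End Replacement.

Theorem lemma3p4 : forall (D : ctx) (p q r : formula),
  (cf (fill D (BForm (FAnd p q))) r -> cf (fill D (BSemi (BForm p) (BForm q))) r) /\
  (cf (fill D (BForm (FStar p q))) r -> cf (fill D (BComma (BForm p) (BForm q))) r) /\
  (cf (fill D (BForm FTop)) r -> cf (fill D BEmpA) r) /\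
  (cf (fill D (BForm FEmp)) r -> cf (fill D BEmpM) r).
Proof.
  intros D p q r.
  repeat split; apply cf_left_unfold; constructor.
Qed.
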